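(* Let $n,m$ be positive integers and $L=L(q,u,z)$ a smooth function on $\mathbb R^n\times\mathbb R^n\times\mathbb R^m$. Let $q:[t_0,t_1]\to\mathbb R^n$ be $C^2$ and let $z:[t_0,t_1]\to\mathbb R^m$, $p:[t_0,t_1]\to\mathbb R^n$, $\mu:[t_0,t_1]\to\mathbb R^m$ be $C^1$ curves such that, with $u=\dot q$ and all derivatives of $L$ evaluated at $(q(t),\dot q(t),z(t))$, $$\dot z_i=L,\qquad \dot p_k=-\Big(\sum_{i=1}^m\mu_i\Big)\frac{\partial L}{\partial q^k},\qquad \dot\mu_i=-\Big(\sum_{j=1}^m\mu_j\Big)\frac{\partial L}{\partial z_i},$$ $$p_k=-\Big(\sum_{i=1}^m\mu_i\Big)\frac{\partial L}{\partial u^k},\qquad \mu_i(t_1)=1,$$ for all $i=1,\dots,m$, $k=1,\dots,n$, $t\in[t_0,t_1]$. Then $q$ satisfies, for all $k$ and $t$, $$\frac{d}{dt}\Big(\frac{\partial L}{\partial\dot q^k}\Big)-\frac{\partial L}{\partial q^k}=\Big(\sum_{i=1}^m\frac{\partial L}{\partial z_i}\Big)\frac{\partial L}{\partial\dot q^k},$$ where $\partial L/\partial\dot q^k$ denotes $\partial L/\partial u^k$ evaluated at $u=\dot q$.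
   Context: These are the Pontryagin maximum principle necessary conditions for the $m$-contact Herglotz variational problem: extremize the terminal cost $\Phi=\sum_{i=1}^mz_i(t_1)$ subject to the control system $\dot q^k=u^k$, $\dot z_i=L(q,u,z)$ ($i=1,\dots,m$) with fixed initial data $q(t_0)=q_0$, $z_i(t_0)=z_i^0$, using the Pontryagin Hamiltonian $H=p_ku^k+\sum_{i=1}^m\mu_iL(q,u,z)$ (adjoint equations $\dot p_k=-\partial H/\partial q^k$, $\dot\mu_i=-\partial H/\partial z_i$, stationarity $\partial H/\partial u^k=0$, transversality $\mu_i(t_1)=1$). The concluding equations are called the $m$-contact Herglotz (Euler–Lagrange) equations. *)

From HB Require Import structures.
From mathcomp Require Import all_boot all_order all_algebra.
From mathcomp Require Import all_classical all_reals all_analysis.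
Set Implicit Arguments. Unset Strict Implicit. Unset Printing Implicit Defensive.
Import Order.TTheory GRing.Theory Num.Theory.
Import numFieldNormedType.Exports.
Local Open Scope classical_set_scope.
Local Open Scope ring_scope.

Section Defs.
Variable R : realType.

Fixpoint iterD {V W : normedModType R} (vs : seq V) (f : V -> W) : V -> W :=
  match vs with
  | [::] => f
  | v :: vs' => fun x => 'D_v (iterD vs' f) x
  end.

Definition smooth {V W : normedModType R} (f : V -> W) : Prop :=
  forall vs : seq V,
    continuous (iterD vs f) /\ (forall (v x : V), derivable (iterD vs f) x v).

Definition uncurryL n m (L : 'rV[R]_n -> 'rV[R]_n -> 'rV[R]_m -> R)
  (x : ('rV[R]_n * 'rV[R]_n) * 'rV[R]_m) : R := L x.1.1 x.1.2 x.2.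

Definition dLq n m (L : 'rV[R]_n -> 'rV[R]_n -> 'rV[R]_m -> R) (k : 'I_n)
  (q u : 'rV[R]_n) (z : 'rV[R]_m) : R :=
  'D_(delta_mx 0 k) (fun x => L x u z) q.
Definition dLu n m (L : 'rV[R]_n -> 'rV[R]_n -> 'rV[R]_m -> R) (k : 'I_n)
  (q u : 'rV[R]_n) (z : 'rV[R]_m) : R :=
  'D_(delta_mx 0 k) (fun x => L q x z) u.
Definition dLz n m (L : 'rV[R]_n -> 'rV[R]_n -> 'rV[R]_m -> R) (i : 'I_m)
  (q u : 'rV[R]_n) (z : 'rV[R]_m) : R :=
  'D_(delta_mx 0 i) (fun x => L q u x) z.

(* f : R -> V has derivative d at t relative to the set A (one-sided at the
   endpoints of an interval): the difference quotient tends to d as s -> t, s in A, s <> t. *)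
Definition has_deriv_within {V : normedModType R} (f : R -> V) (A : set R) (t : R) (d : V)
  : Prop :=
  (fun s => (s - t)^-1 *: (f s - f t)) @ within (fun s => A s /\ s != t) (nbhs t) --> d.

End Defs.

From HB Require Import structures.
From mathcomp Require Import all_boot all_order all_algebra.
From mathcomp Require Import all_classical all_reals all_analysis.
From mathcomp Require Import ring.
Set Implicit Arguments.
Unset Strict Implicit.
Unset Printing Implicit Defensive.

Import Order.TTheory GRing.Theory Num.Theory.
Import numFieldNormedType.Exports.
Local Open Scope classical_set_scope.
Local Open Scope ring_scope.

(* Put S = \sum_i mu_i and Z = \sum_i dL/dz_i along the curve. The adjoint
   equations give S' = - S Z and transversality gives S(t1) = m <> 0. As Z is
   continuous on [t0, t1], it is bounded there by some K, which makes
   S^2 exp(-2 K t) nonincreasing; hence S has no zero on [t0, t1].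
   Stationarity p_k = - S dL/du^k then exhibits dL/du^k as the quotient
   - p_k / S, and the quotient rule together with p_k' = - S dL/dq^k and
   S' = - S Z gives the Herglotz equation. *)

Section HasDerivWithin.
Context {R : realType}.
Implicit Types (A : set R) (t : R).

Lemma has_deriv_within_entry p r (f : R -> 'M[R]_(p, r)) A t d i j :
  has_deriv_within f A t d -> has_deriv_within (fun s => f s i j) A t (d i j).
Proof.
move=> fd; rewrite /has_deriv_within.
have -> : (fun s => (s - t)^-1 *: (f s i j - f t i j)) =
    (fun M : 'M[R]_(p, r) => M i j) \o (fun s => (s - t)^-1 *: (f s - f t)).
  by apply/funext => s /=; rewrite !mxE.
exact: cvg_comp fd (@coord_continuous _ _ _ i j d).
Qed.

Lemma has_deriv_withinN (V : normedModType R) (f : R -> V) A t d :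
  has_deriv_within f A t d -> has_deriv_within (fun s => - f s) A t (- d).
Proof.
move=> fd; rewrite /has_deriv_within.
have -> : (fun s => (s - t)^-1 *: (- f s - - f t)) =
    (fun s => - ((s - t)^-1 *: (f s - f t))).
  by apply/funext => s /=; rewrite -scalerN opprD.
exact: cvgN fd.
Qed.

Lemma has_deriv_within_sum (V : normedModType R) (I : Type) (r : seq I) (P : pred I)
    (F : I -> R -> V) A t (d : I -> V) :
  (forall i, P i -> has_deriv_within (F i) A t (d i)) ->
  has_deriv_within (fun s => \sum_(i <- r | P i) F i s) A t (\sum_(i <- r | P i) d i).
Proof.
move=> Fd; rewrite /has_deriv_within.
have -> : (fun s => (s - t)^-1 *: (\sum_(i <- r | P i) F i s - \sum_(i <- r | P i) F i t)) =
    (fun s => \sum_(i <- r | P i) (s - t)^-1 *: (F i s - F i t)).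
  by apply/funext => s; rewrite -sumrB scaler_sumr.
by apply: cvg_big => //; exact: add_continuous.
Qed.

Lemma has_deriv_within_cvg (V : normedModType R) (f : R -> V) A t d :
  has_deriv_within f A t d -> f @ within (fun s => A s /\ s != t) (nbhs t) --> f t.
Proof.
move=> fd; set F := within _ _.
have E : {near F, (fun s => f t + (s - t) *: ((s - t)^-1 *: (f s - f t))) =1 f}.
  near=> s.
  have [_ st] : A s /\ s != t by near: s; apply: withinT.
  by rewrite scalerA mulfV ?subr_eq0 // scale1r addrC subrK.
apply: cvg_trans; first exact: near_eq_cvg E.
have dt0 : (fun s => s - t) @ nbhs t --> (0 : R).
  by rewrite -[X in _ --> X](subrr t); apply: cvgB; [exact: cvg_id | exact: cvg_cst].
have lim : (fun s => f t + (s - t) *: ((s - t)^-1 *: (f s - f t))) @ F --> f t + 0 *: d.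
  by apply: cvgD; [exact: cvg_cst | exact: cvgZ (cvg_within_filter _ dt0) fd].
by rewrite scale0r addr0 in lim.
Unshelve. all: by end_near. Qed.

Lemma has_deriv_within_continuous (V : normedModType R) (f : R -> V) A (d : R -> V) :
  (forall t, A t -> has_deriv_within f A t (d t)) -> {within A, continuous f}.
Proof.
move=> fd; apply/subspace_continuousP => t At U /[dup] /nbhs_singleton Uft.
move=> /(has_deriv_within_cvg (fd t At)).
change ({near nbhs t, (fun s => A s /\ s != t) `<=` f @^-1` U} ->
  {near nbhs t, A `<=` f @^-1` U}).
apply: filterS => s Us As.
by case: (eqVneq s t) => [->|st]; [exact: Uft | exact: Us].
Qed.

Lemma shift_dnbhs_within (P : set R) t : (\forall s \near t, P s) ->
  (fun h => h + t) @ (0 : R)^' `=>` within (fun s => P s /\ s != t) (nbhs t).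
Proof.
move=> Pt X Xt.
have shift_cvg : (fun h : R => h + t) @ nbhs (0 : R) --> t.
  by rewrite -[X in _ --> X](add0r t); apply: cvgD; [exact: cvg_id | exact: cvg_cst].
have : \forall h \near (0 : R), P (h + t) /\ (P (h + t) /\ h + t != t -> X (h + t)).
  exact: shift_cvg _ (filterI Pt Xt).
change ((\forall h \near (0 : R), P (h + t) /\ (P (h + t) /\ h + t != t -> X (h + t))) ->
  {near nbhs (0 : R), (fun h => h != 0) `<=` (fun h => X (h + t))}).
apply: filterS => h [Ph Xh] h0; apply: Xh; split => //.
by rewrite -subr_eq0 addrK.
Qed.

Lemma has_deriv_within_is_derive (f : R -> R) a b t d : a < t < b ->
  has_deriv_within f [set s | a <= s <= b] t d -> is_derive t 1 f d.
Proof.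
move=> abt fd.
have quotient_cvg : (fun h : R => h^-1 *: ((f \o shift t) (h *: 1) - f t)) @ (0 : R)^' --> d.
  have -> : (fun h : R => h^-1 *: ((f \o shift t) (h *: 1) - f t)) =
      (fun s => (s - t)^-1 *: (f s - f t)) \o (fun h => h + t).
    by apply/funext => h /=; rewrite addrK /shift /= [h *: 1]mulr1.
  have near_I : \forall s \near t, a <= s <= b.
    have := near_in_itvoo (a := a) (b := b) (x := t).
    rewrite in_itv /= abt => /(_ isT).
    by apply: filterS => s; rewrite in_itv /= => /andP[/ltW -> /ltW ->].
  exact: cvg_comp (shift_dnbhs_within near_I) fd.
apply: DeriveDef; first exact: cvgP quotient_cvg.
exact: cvg_lim quotient_cvg.
Qed.

Lemma has_deriv_within_quotient (P G U : R -> R) A t dP dG :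
  A t -> (forall s, A s -> P s = G s * U s) -> (forall s, A s -> G s != 0) ->
  has_deriv_within P A t dP -> has_deriv_within G A t dG ->
  has_deriv_within U A t ((dP - U t * dG) / G t).
Proof.
move=> At PGU G_neq0 dPt dGt; rewrite /has_deriv_within.
set F := within _ _.
have E : {near F, (fun s => ((s - t)^-1 *: (P s - P t)
      - U t * ((s - t)^-1 *: (G s - G t))) / G s) =1
    (fun s => (s - t)^-1 *: (U s - U t))}.
  near=> s.
  have [As st] : A s /\ s != t by near: s; apply: withinT.
  have Gs := G_neq0 s As; have st0 : s - t != 0 by rewrite subr_eq0.
  rewrite /= !PGU // /GRing.scale /=.
  by field; rewrite Gs st0.
apply: cvg_trans; first exact: near_eq_cvg E.
apply: cvgM; last exact: cvgV (G_neq0 t At) (has_deriv_within_cvg dGt).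
by apply: cvgB => //; apply: cvgM => //; exact: cvg_cst.
Unshelve. all: by end_near. Qed.

End HasDerivWithin.

Section LinearODE.
Context {R : realType}.
Variables (S Z : R -> R) (a b K : R).
Hypothesis S_deriv : forall s, a <= s <= b ->
  has_deriv_within S [set s | a <= s <= b] s (S s * Z s).
Hypothesis Z_bounded : forall s, a <= s <= b -> `|Z s| <= K.

Lemma linear_ode_weighted_sqr_nincr :
  {in `[a, b] &, {homo (fun s => S s ^+ 2 * expR (- (2 * K) * s)) : x y /~ x <= y}}.
Proof.
pose e (s : R) := expR (- (2 * K) * s).
have e_deriv (x : R) : is_derive x 1 e (e x * - (2 * K)).
  apply: is_derive1_comp.
  apply: is_derive_eq (is_deriveZ (- (2 * K)) (is_derive_id x (1 : R))) _.
  by rewrite [LHS]mulr1.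
have W_deriv (x : R) : a < x < b ->
    is_derive x 1 (S ^+ 2 * e) (2 * S x ^+ 2 * e x * (Z x - K)).
  move=> /[dup] axb /andP[ax xb].
  have Ix : a <= x <= b by rewrite (ltW ax) (ltW xb).
  have dS := has_deriv_within_is_derive axb (S_deriv Ix).
  apply: is_derive_eq (is_deriveM (is_deriveX 2 dS) (e_deriv x)) _.
  rewrite exprfctE /GRing.scale /= expr1; ring.
apply: ler0_derive1_le_cc.
- by move=> x; rewrite in_itv /= => /W_deriv W'x; exact: ex_derive.
- move=> x; rewrite in_itv /= => /[dup] /W_deriv W'x /andP[ax xb].
  rewrite derive1E derive_val.
  have Ix : a <= x <= b by rewrite (ltW ax) (ltW xb).
  have Zx : Z x <= K := le_trans (ler_norm _) (Z_bounded Ix).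
  apply: mulr_ge0_le0; last by rewrite subr_le0.
  by apply: mulr_ge0; [apply: mulr_ge0; [| exact: sqr_ge0] | exact: expR_ge0].
- rewrite set_itvcc; apply/subspace_continuousP => x Ix.
  have Sx : S s @[s --> within [set s | a <= s <= b] (nbhs x)] --> S x.
    by move/subspace_continuousP: (has_deriv_within_continuous S_deriv); apply.
  have e_cont : continuous e.
    move=> y; apply: continuous_comp; last exact: continuous_expR.
    by apply: cvgM; [exact: cvg_cst | exact: cvg_id].
  by apply: cvgM; [rewrite expr2; exact: cvgM | exact: cvg_within_filter (e_cont x)].
Qed.

Lemma linear_ode_neq0 : S b != 0 -> forall s, a <= s <= b -> S s != 0.
Proof.
move=> Sb_neq0 s /[dup] Is /andP[le_as le_sb]; apply: contra_neq Sb_neq0 => Ss0.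
have Ib : b \in `[a, b] by rewrite in_itv /= lexx (le_trans le_as le_sb).
have := linear_ode_weighted_sqr_nincr Ib (_ : s \in `[a, b]) le_sb.
rewrite in_itv /= Is Ss0 expr0n /= mul0r => /(_ isT) W_le0.
have : S b ^+ 2 * expR (- (2 * K) * b) == 0.
  by rewrite eq_le W_le0 mulr_ge0 ?sqr_ge0 ?expR_ge0.
by rewrite mulf_eq0 (gt_eqF (expR_gt0 _)) orbF sqrf_eq0 => /eqP.
Qed.

End LinearODE.

Lemma within_itvcc_continuous_bounded {R : realType} (f : R -> R) (a b : R) :
  {within [set s | a <= s <= b], continuous f} ->
  exists K, forall s, a <= s <= b -> `|f s| <= K.
Proof.
move=> f_cont; have [le_ab|lt_ba] := leP a b; last first.
  by exists 0 => s /andP[le_as /(le_trans le_as)]; rewrite leNgt lt_ba.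
have norm_cont : {within `[a, b], continuous (fun s => `|f s|)}.
  rewrite set_itvcc; apply/subspace_continuousP => x Ix; apply: cvg_norm.
  by move/subspace_continuousP: f_cont; apply.
have [c _ c_max] := EVT_max le_ab norm_cont.
by exists `|f c| => s Is; apply: c_max; rewrite in_itv.
Qed.

Section LagrangianPartials.
Context {R : realType} {n m : nat}.
Variable L : 'rV[R]_n -> 'rV[R]_n -> 'rV[R]_m -> R.

Lemma dLzE i q u z :
  dLz L i q u z = 'D_((0, 0), delta_mx 0 i) (uncurryL L) ((q, u), z).
Proof.
rewrite /dLz /derive; do 2 f_equal; apply/funext => h.
by rewrite /uncurryL /shift /= !scaler0 !add0r.
Qed.

Lemma smooth_continuous_dLz i : smooth (uncurryL L) ->
  continuous (fun x : ('rV[R]_n * 'rV[R]_n) * 'rV[R]_m => dLz L i x.1.1 x.1.2 x.2).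
Proof.
move=> L_smooth [[q u] z]; under eq_fun do rewrite dLzE.
exact: (L_smooth [:: ((0, 0), delta_mx 0 i)]).1.
Qed.

Lemma within_continuous_sum_dLz (A : set R) (q u : R -> 'rV[R]_n) (z : R -> 'rV[R]_m) :
  smooth (uncurryL L) -> {within A, continuous q} -> {within A, continuous u} ->
  {within A, continuous z} ->
  {within A, continuous (fun s => \sum_(i < m) dLz L i (q s) (u s) (z s))}.
Proof.
move=> L_smooth /subspace_continuousP q_cont /subspace_continuousP u_cont
  /subspace_continuousP z_cont.
apply/subspace_continuousP => t At.
apply: cvg_big => // [|i _]; first exact: add_continuous.
have curve_cont : (fun s => ((q s, u s), z s)) @ within A (nbhs t) --> ((q t, u t), z t).
  exact: cvg_pair (cvg_pair (q_cont t At) (u_cont t At)) (z_cont t At).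
have dLz_cont := smooth_continuous_dLz (i := i) L_smooth.
exact: cvg_comp curve_cont (dLz_cont ((q t, u t), z t)).
Qed.

End LagrangianPartials.

Theorem mainTheorem8 (R : realType) (n m : nat) (hn : (0 < n)%N) (hm : (0 < m)%N)
  (L : 'rV[R]_n -> 'rV[R]_n -> 'rV[R]_m -> R) (hL : smooth (uncurryL L))
  (t0 t1 : R) (ht : t0 < t1)
  (q qd qdd : R -> 'rV[R]_n) (z zd : R -> 'rV[R]_m)
  (p pd : R -> 'rV[R]_n) (mu mud : R -> 'rV[R]_m) :
  let I := [set t : R | t0 <= t <= t1] in
  (* q is C^2 on [t0,t1], with first and second derivatives qd, qdd *)
  (forall t, I t -> has_deriv_within q I t (qd t)) ->
  (forall t, I t -> has_deriv_within qd I t (qdd t)) ->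
  {within I, continuous qdd} ->
  (* z, p, mu are C^1 on [t0,t1], with derivatives zd, pd, mud *)
  (forall t, I t -> has_deriv_within z I t (zd t)) -> {within I, continuous zd} ->
  (forall t, I t -> has_deriv_within p I t (pd t)) -> {within I, continuous pd} ->
  (forall t, I t -> has_deriv_within mu I t (mud t)) -> {within I, continuous mud} ->
  (* the Pontryagin conditions *)
  (forall t, I t -> forall i : 'I_m, zd t 0 i = L (q t) (qd t) (z t)) ->
  (forall t, I t -> forall k : 'I_n,
     pd t 0 k = - (\sum_(i < m) mu t 0 i) * dLq L k (q t) (qd t) (z t)) ->
  (forall t, I t -> forall i : 'I_m,
     mud t 0 i = - (\sum_(j < m) mu t 0 j) * dLz L i (q t) (qd t) (z t)) ->
  (forall t, I t -> forall k : 'I_n,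
     p t 0 k = - (\sum_(i < m) mu t 0 i) * dLu L k (q t) (qd t) (z t)) ->
  (forall i : 'I_m, mu t1 0 i = 1) ->
  (* the m-contact Herglotz equations *)
  forall k : 'I_n, forall t, I t ->
    has_deriv_within (fun s => dLu L k (q s) (qd s) (z s)) I t
      (dLq L k (q t) (qd t) (z t)
       + (\sum_(i < m) dLz L i (q t) (qd t) (z t)) * dLu L k (q t) (qd t) (z t)).
Proof.
move=> I dq dqd _ dz _ dp _ dmu _ _ Epd Emud Ep Emu1 k t It.
set S := fun s => \sum_(i < m) mu s 0 i.
set Z := fun s => \sum_(i < m) dLz L i (q s) (qd s) (z s).
have dS s : I s -> has_deriv_within S I s (S s * - Z s).
  move=> Is; have -> : S s * - Z s = \sum_(i < m) mud s 0 i.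
    by rewrite (eq_bigr _ (fun i _ => Emud s Is i)) -mulr_sumr mulrN mulNr.
  by apply: has_deriv_within_sum => i _; exact: has_deriv_within_entry (dmu s Is).
have [K Z_bounded] : exists K, forall s, I s -> `|Z s| <= K.
  apply: within_itvcc_continuous_bounded.
  exact: within_continuous_sum_dLz hL (has_deriv_within_continuous dq)
    (has_deriv_within_continuous dqd) (has_deriv_within_continuous dz).
have S_neq0 : forall s, I s -> S s != 0.
  apply: (linear_ode_neq0 (K := K) dS) => [s /Z_bounded|]; first by rewrite normrN.
  rewrite /S /= (eq_bigr (fun=> 1)) => [|i _]; last exact: Emu1.
  by rewrite sumr_const card_ord pnatr_eq0 -lt0n.
set U := fun s => dLu L k (q s) (qd s) (z s).
have pSU s : I s -> - p s 0 k = S s * U s by move=> Is; rewrite Ep // mulNr opprK.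
have := has_deriv_within_quotient It pSU S_neq0
  (has_deriv_withinN (has_deriv_within_entry (i := 0) (j := k) (dp t It))) (dS t It).
suff -> : (- pd t 0 k - U t * (S t * - Z t)) / S t =
  dLq L k (q t) (qd t) (z t) + Z t * U t by [].
rewrite Epd // -/(S t); field; exact: S_neq0.
Qed.
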